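(* (a) For all $y\ge x_0\ge0$, \[F'(y)=\exp\{-y^2/2+x_0^2/2\}F'(x_0)+\int_{x_0}^y\exp\{-y^2/2+z^2/2\}F(z)(F(z)-2)\,dz.\] (b) $\lim_{y\to\infty}e^{y^2/2}\frac{F'(y)}{y^2}=-c_0$. (c) $1<F(0)<2$. (d) $F$ is strictly decreasing on $[0,\infty)$.
   Context: $F:\mathbb{R}\to(0,\infty)$ is defined by $F(x)=V^\infty(1,x)=\lim_{\lambda\to\infty}V^\lambda(1,x)$, where $V^\lambda$ is the solution of $\partial_tV=\frac12\partial_x^2V-\frac12V^2$, $V(0,\cdot)=\lambda\delta_0$. It is known that $F$ is symmetric, $C^2$ on $\mathbb{R}$, positive, and is the unique such function satisfying $\frac{F''(y)}2+\frac y2F'(y)+F(y)-\frac{F(y)^2}2=0$, $F'(0)=0$, and $F(y)\sim c_0ye^{-y^2/2}$ as $y\to\infty$ (ratio tends to one), for some constant $c_0>0$; $c_0$ denotes this constant. *)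

From Stdlib Require Import Reals.
From Coquelicot Require Import Coquelicot.
Open Scope R_scope.

(* [is_F F c0]: F : R -> R is symmetric, positive, C^2 on R, solves
     F''(y)/2 + (y/2) F'(y) + F(y) - F(y)^2/2 = 0,  F'(0) = 0,
   and F(y) ~ c0 * y * exp(-y^2/2) as y -> +oo (ratio tends to 1), c0 > 0.
   By the paper (context), F = V^oo(1,.) is the unique such function. *)
Definition is_F (F : R -> R) (c0 : R) : Prop :=
  (forall y, F (- y) = F y) /\
  (forall y, 0 < F y) /\
  (forall y, ex_derive F y) /\
  (forall y, ex_derive (Derive F) y) /\
  (forall y, continuous (Derive (Derive F)) y) /\
  (forall y, Derive (Derive F) y / 2 + y / 2 * Derive F y + F y - F y ^ 2 / 2 = 0) /\
  Derive F 0 = 0 /\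
  0 < c0 /\
  is_lim (fun y => F y / (c0 * y * exp (- y ^ 2 / 2))) p_infty 1.

From Stdlib Require Import Reals Lra Psatz.
From Coquelicot Require Import Coquelicot.
Open Scope R_scope.

(* The ODE says exactly that (e^{y^2/2} F')' = e^{y^2/2} F (F - 2); integrating gives (a).
   Since F ~ c0 y e^{-y^2/2}, the right-hand side is ~ -2 c0 y, and a l'Hopital-type
   argument gives (b).  For (c) and (d): F(0) = 2 would force F = 2 by uniqueness for
   the linear equation satisfied by F - 2, which is incompatible with F -> 0; the
   energy F'^2/2 + F^2 - F^3/3, nonincreasing on [0, oo), then keeps F away from the
   value 2, so F < 2 on [0, oo) and e^{y^2/2} F' decreases from its value 0 at 0.
   Finally W = F' + y F satisfies W' = F (F - 1) and W(0) = 0 = W(oo), which rules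
   out F(0) <= 1. *)

Lemma mean_value (f df : R -> R) (a b : R) : a < b ->
  (forall c, a <= c <= b -> is_derive f c (df c)) ->
  exists c, a < c < b /\ f b - f a = df c * (b - a).
Proof.
  intros Hab Hd. destruct (MVT_cor2 f df a b Hab) as [c [Hfc Hc]].
  - intros c Hc; apply is_derive_Reals; auto.
  - exists c; auto.
Qed.

Lemma decreasing_of_is_derive_neg (f df : R -> R) (a b : R) : a < b ->
  (forall c, a <= c <= b -> is_derive f c (df c)) ->
  (forall c, a < c < b -> df c < 0) -> f b < f a.
Proof.
  intros Hab Hd Hneg. destruct (mean_value f df a b Hab Hd) as [c [Hc Hfc]].
  specialize (Hneg c Hc). nra.
Qed.

Lemma nonincreasing_of_is_derive_nonpos (f df : R -> R) (a b : R) : a <= b ->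
  (forall c, a <= c <= b -> is_derive f c (df c)) ->
  (forall c, a < c < b -> df c <= 0) -> f b <= f a.
Proof.
  intros Hab Hd Hnonpos. destruct (Req_dec a b) as [->|Hne]; [lra|].
  destruct (mean_value f df a b ltac:(lra) Hd) as [c [Hc Hfc]].
  specialize (Hnonpos c Hc). nra.
Qed.

Lemma is_lim_mult' (f g : R -> R) (x : Rbar) (lf lg : R) :
  is_lim f x lf -> is_lim g x lg -> is_lim (fun y => f y * g y) x (lf * lg).
Proof. intros Hf Hg. exact (is_lim_mult f g x lf lg Hf Hg I). Qed.

Lemma is_lim_sqr_mul_exp_neg : is_lim (fun y => y ^ 2 * exp (- y ^ 2 / 2)) p_infty 0.
Proof.
  assert (Hsq : is_lim (fun y => y ^ 2 / 2) p_infty p_infty).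
  { apply (is_lim_le_p_loc (fun y => y)); [|apply is_lim_id].
    exists 2; intros y Hy; nra. }
  assert (Hinv : is_lim (fun u => / (exp u / u)) p_infty 0).
  { apply (is_lim_inv _ _ p_infty is_lim_div_exp_p); discriminate. }
  assert (Hc := is_lim_scal_l _ 2 _ _ (is_lim_comp _ _ _ _ _ Hinv Hsq ltac:(now exists 0))).
  change (Rbar_mult 2 0) with (Finite (2 * 0)) in Hc. rewrite Rmult_0_r in Hc.
  eapply is_lim_ext_loc; [|exact Hc].
  exists 0. intros y Hy.
  replace (- y ^ 2 / 2) with (- (y ^ 2 / 2)) by field. rewrite exp_Ropp.
  pose proof (exp_pos (y ^ 2 / 2)). field. split; [lra|nra].
Qed.

Lemma is_lim_div_sqr_of_is_derive (G g : R -> R) (L : R) :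
  (forall y, 0 < y -> is_derive G y (g y)) ->
  is_lim (fun y => g y / (2 * y)) p_infty L ->
  is_lim (fun y => G y / y ^ 2) p_infty L.
Proof.
  intros HG Hg. apply is_lim_spec in Hg. apply is_lim_spec. intros eps.
  pose proof (cond_pos eps) as Heps.
  destruct (Hg (mkposreal (eps / 4) ltac:(lra))) as [M HM]. simpl in HM.
  (* mean value theorem for H on [A, y], with A past the point where H'(c) / (2 c) is small *)
  set (H := fun y => G y - L * y ^ 2).
  set (A := Rmax M 0 + 1).
  assert (HMA : M < A) by (pose proof (Rmax_l M 0); unfold A; lra).
  assert (HA : 0 < A) by (pose proof (Rmax_r M 0); unfold A; lra).
  exists (Rmax (A + 1) (2 * Rabs (H A) / eps + 1)). intros y Hy.
  assert (HyA : A + 1 < y) by (eapply Rle_lt_trans; [apply Rmax_l|exact Hy]).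
  assert (HyHA : 2 * Rabs (H A) / eps + 1 < y) by (eapply Rle_lt_trans; [apply Rmax_r|exact Hy]).
  assert (Hincr : Rabs (H y - H A) <= y ^ 2 * (eps / 2)).
  { destruct (mean_value H (fun c => 2 * c * (g c / (2 * c) - L)) A y) as [c [Hc ->]]; [lra| |].
    - intros c Hc. unfold H.
      replace (2 * c * (g c / (2 * c) - L)) with (g c - L * (2 * c)) by (field; lra).
      apply (is_derive_minus G (fun y => L * y ^ 2)); [apply HG; lra|].
      auto_derive; [auto|ring].
    - specialize (HM c ltac:(lra)).
      rewrite !Rabs_mult, (Rabs_pos_eq 2), (Rabs_pos_eq c), (Rabs_pos_eq (y - A)) by lra.
      pose proof (Rabs_pos (g c / (2 * c) - L)).
      assert (2 * c * (y - A) <= 2 * y ^ 2) by nra.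
      apply Rle_trans with (2 * c * (y - A) * (eps / 4)); [|nra].
      replace (2 * c * Rabs (g c / (2 * c) - L) * (y - A))
        with (2 * c * (y - A) * Rabs (g c / (2 * c) - L)) by ring.
      apply Rmult_le_compat_l; nra. }
  assert (Hstart : Rabs (H A) < y ^ 2 * (eps / 2)).
  { assert (2 * Rabs (H A) < y * eps).
    { apply Rmult_lt_reg_r with (/ eps); [apply Rinv_0_lt_compat; lra|].
      replace (y * eps * / eps) with y by (field; lra). unfold Rdiv in HyHA. lra. }
    assert (0 < y * eps * (y - 1)) by (apply Rmult_lt_0_compat; nra).
    lra. }
  replace (G y / y ^ 2 - L) with (H y / y ^ 2) by (unfold H; field; nra).
  unfold Rdiv. rewrite Rabs_mult, Rabs_inv, (Rabs_pos_eq (y ^ 2)) by nra.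
  apply Rmult_lt_reg_r with (y ^ 2); [nra|].
  rewrite Rmult_assoc, Rinv_l by nra.
  pose proof (Rabs_triang (H y - H A) (H A)).
  replace (H y - H A + H A) with (H y) in * by ring. lra.
Qed.

Section Profile.

Variables (F : R -> R) (c0 : R).
Hypothesis HF : is_F F c0.

Lemma is_derive_F y : is_derive F y (Derive F y).
Proof. destruct HF as (_&_&H&_). apply Derive_correct, H. Qed.

Lemma is_derive_Derive_F y : is_derive (Derive F) y (Derive (Derive F) y).
Proof. destruct HF as (_&_&_&H&_). apply Derive_correct, H. Qed.

Lemma Derive2_F y : Derive (Derive F) y = F y * (F y - 2) - y * Derive F y.
Proof. destruct HF as (_&_&_&_&_&H&_). specialize (H y). lra. Qed.

Lemma F_pos y : 0 < F y.
Proof. destruct HF as (_&H&_). apply H. Qed.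

Lemma Derive_F_0 : Derive F 0 = 0.
Proof. destruct HF as (_&_&_&_&_&_&H&_). exact H. Qed.

Lemma is_derive_exp_mul_Derive_F y :
  is_derive (fun z => exp (z ^ 2 / 2) * Derive F z) y (exp (y ^ 2 / 2) * (F y * (F y - 2))).
Proof.
  pose proof (is_derive_Derive_F y) as HDF.
  assert (Hexp : is_derive (fun z => exp (z ^ 2 / 2)) y (y * exp (y ^ 2 / 2))).
  { auto_derive; auto. replace (y * (y * 1) * / 2) with (y ^ 2 / 2) by field. field. }
  replace (exp (y ^ 2 / 2) * (F y * (F y - 2))) with
    (y * exp (y ^ 2 / 2) * Derive F y + exp (y ^ 2 / 2) * Derive (Derive F) y)
    by (rewrite Derive2_F; ring).
  apply (is_derive_mult (fun z => exp (z ^ 2 / 2)) (Derive F)); auto.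
  intros; apply Rmult_comm.
Qed.

Lemma Derive_F_eq_RInt x0 y :
  Derive F y =
    exp (- y ^ 2 / 2 + x0 ^ 2 / 2) * Derive F x0
    + RInt (fun z => exp (- y ^ 2 / 2 + z ^ 2 / 2) * F z * (F z - 2)) x0 y.
Proof.
  set (g := fun z => exp (z ^ 2 / 2) * (F z * (F z - 2))).
  assert (Hg : is_RInt g x0 y
                 (exp (y ^ 2 / 2) * Derive F y - exp (x0 ^ 2 / 2) * Derive F x0)).
  { apply (is_RInt_derive (V := R_CompleteNormedModule) (fun z => exp (z ^ 2 / 2) * Derive F z) g).
    - intros z _. apply is_derive_exp_mul_Derive_F.
    - intros z _. apply (ex_derive_continuous (V := R_NormedModule)). unfold g.
      destruct HF as (_&_&HdF&_). auto_derive. auto. }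
  rewrite (RInt_ext _ (fun z => scal (exp (- y ^ 2 / 2)) (g z)))
    by (intros z _; unfold g, scal; simpl; unfold mult; simpl; rewrite exp_plus; ring).
  rewrite (RInt_scal (V := R_CompleteNormedModule)) by (eexists; exact Hg).
  rewrite (is_RInt_unique _ _ _ _ Hg), exp_plus.
  change (scal ?a ?b) with (a * b).
  assert (Hexp : exp (- y ^ 2 / 2) * exp (y ^ 2 / 2) = 1).
  { rewrite <- exp_plus, <- exp_0. f_equal. field. }
  rewrite <- (Rmult_1_l (Derive F y)) at 1. rewrite <- Hexp. ring.
Qed.

Lemma F_mul_is_lim (h : R -> R) (l : R) :
  is_lim (fun y => c0 * y * exp (- y ^ 2 / 2) * h y) p_infty l ->
  is_lim (fun y => F y * h y) p_infty l.
Proof.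
  intros Hh. destruct HF as (_&_&_&_&_&_&_&Hc0&Hratio).
  assert (H := is_lim_mult' _ _ _ _ _ Hratio Hh). rewrite Rmult_1_l in H.
  eapply is_lim_ext_loc; [|exact H].
  exists 0. intros y Hy. pose proof (exp_pos (- y ^ 2 / 2)).
  field. repeat split; lra.
Qed.

Lemma is_lim_F : is_lim F p_infty 0.
Proof.
  assert (Hinv : is_lim (fun y => / y) p_infty 0).
  { apply (is_lim_inv _ _ p_infty (is_lim_id p_infty)); discriminate. }
  assert (H := is_lim_mult' _ _ _ _ _ (is_lim_scal_l _ c0 _ _ is_lim_sqr_mul_exp_neg) Hinv).
  change (Rbar_mult c0 0) with (Finite (c0 * 0)) in H.
  replace (c0 * 0 * 0) with 0 in H by ring.
  apply (is_lim_ext (fun y => F y * 1)); [intros; ring|].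
  apply F_mul_is_lim. eapply is_lim_ext_loc; [|exact H].
  exists 0. intros y Hy. field. lra.
Qed.

Lemma is_lim_id_mul_F : is_lim (fun y => y * F y) p_infty 0.
Proof.
  assert (H := is_lim_scal_l _ c0 _ _ is_lim_sqr_mul_exp_neg).
  change (Rbar_mult c0 0) with (Finite (c0 * 0)) in H. rewrite Rmult_0_r in H.
  apply (is_lim_ext (fun y => F y * y)); [intros; ring|].
  apply F_mul_is_lim. eapply is_lim_ext; [|exact H]. intros y. simpl. ring.
Qed.

Lemma is_lim_exp_mul_Derive_F :
  is_lim (fun y => exp (y ^ 2 / 2) * Derive F y / y ^ 2) p_infty (- c0).
Proof.
  apply (is_lim_div_sqr_of_is_derive _ (fun y => exp (y ^ 2 / 2) * (F y * (F y - 2)))).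
  { intros y _. apply is_derive_exp_mul_Derive_F. }
  apply (is_lim_ext_loc (fun y => F y * (exp (y ^ 2 / 2) * (F y - 2) / (2 * y)))).
  { exists 0. intros y Hy. field. lra. }
  apply F_mul_is_lim.
  assert (H := is_lim_scal_l _ (c0 / 2) _ _ (is_lim_minus' _ _ _ _ _ is_lim_F (is_lim_const 2 _))).
  change (Rbar_mult (c0 / 2) (0 - 2)) with (Finite (c0 / 2 * (0 - 2))) in H.
  replace (c0 / 2 * (0 - 2)) with (- c0) in H by field.
  eapply is_lim_ext_loc; [|exact H].
  exists 0. intros y Hy.
  replace (- y ^ 2 / 2) with (- (y ^ 2 / 2)) by field. rewrite exp_Ropp.
  pose proof (exp_pos (y ^ 2 / 2)). field. lra.
Qed.

Lemma is_lim_Derive_F : is_lim (Derive F) p_infty 0.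
Proof.
  assert (H := is_lim_mult' _ _ _ _ _ is_lim_exp_mul_Derive_F is_lim_sqr_mul_exp_neg).
  rewrite Rmult_0_r in H. eapply is_lim_ext_loc; [|exact H].
  exists 0. intros y Hy.
  replace (- y ^ 2 / 2) with (- (y ^ 2 / 2)) by field. rewrite exp_Ropp.
  pose proof (exp_pos (y ^ 2 / 2)). field. split; nra.
Qed.

Lemma exists_F_lt_1 : exists T, 0 < T /\ F T < 1.
Proof.
  destruct (proj2 (is_lim_spec _ _ _) is_lim_F (mkposreal 1 Rlt_0_1)) as [M HM]. simpl in HM.
  exists (Rmax M 0 + 1). pose proof (Rmax_l M 0). pose proof (Rmax_r M 0).
  specialize (HM (Rmax M 0 + 1) ltac:(lra)). rewrite Rminus_0_r in HM.
  pose proof (Rle_abs (F (Rmax M 0 + 1))). lra.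
Qed.

Lemma F_0_neq_2 : F 0 <> 2.
Proof.
  intros HF0. destruct exists_F_lt_1 as [T [HT HFT]].
  destruct (continuity_ab_maj F 0 T ltac:(lra)) as [m [Hm _]].
  { intros c _. apply derivable_continuous_pt, ex_derive_Reals_0. eexists. apply is_derive_F. }
  set (K := 1 + F m).
  set (P := fun y => ((F y - 2) ^ 2 + Derive F y ^ 2) * exp (- K * y)).
  assert (HP : forall c, is_derive P c
       ((2 * (F c - 2) * Derive F c + 2 * Derive F c * Derive (Derive F) c
         - K * ((F c - 2) ^ 2 + Derive F c ^ 2)) * exp (- K * c))).
  { intros c. destruct HF as (_&_&HdF&HdDF&_).
    unfold P. auto_derive; [auto|].
    change (Derive (fun x => Derive F x) c) with (Derive (Derive F) c).
    change (Derive (fun x => F x) c) with (Derive F c). ring. }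
  assert (HPT : P T <= P 0).
  { apply (nonincreasing_of_is_derive_nonpos P _ 0 T ltac:(lra) (fun c _ => HP c)).
    intros c Hc. rewrite Derive2_F.
    assert (F c <= F m) by (apply Hm; lra). pose proof (F_pos c).
    set (a := F c - 2). set (b := Derive F c).
    (* 2 a b (1 + F c) <= (1 + F c) (a^2 + b^2) <= K (a^2 + b^2), and c b^2 >= 0 *)
    assert (0 <= (1 + F c) * (a - b) ^ 2) by (apply Rmult_le_pos; [lra|apply pow2_ge_0]).
    assert (0 <= (K - 1 - F c) * (a ^ 2 + b ^ 2))
      by (apply Rmult_le_pos; [unfold K; lra|pose proof (pow2_ge_0 a); pose proof (pow2_ge_0 b); lra]).
    assert (0 <= c * b ^ 2) by (apply Rmult_le_pos; [lra|apply pow2_ge_0]).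
    assert (2 * a * b + 2 * b * (F c * a - c * b) - K * (a ^ 2 + b ^ 2) <= 0).
    { replace (F c * a) with ((a + 2) * a) by (unfold a; ring). unfold a in *. nra. }
    pose proof (exp_pos (- K * c)). nra. }
  unfold P in HPT. rewrite HF0, Derive_F_0 in HPT.
  pose proof (exp_pos (- K * T)). pose proof (pow2_ge_0 (Derive F T)).
  assert (1 < (F T - 2) ^ 2) by (pose proof (F_pos T); nra).
  nra.
Qed.

Lemma F_neq_2 y : 0 <= y -> F y <> 2.
Proof.
  intros Hy HFy.
  set (E := fun y => Derive F y ^ 2 / 2 + F y ^ 2 - F y ^ 3 / 3).
  assert (HE : forall c, is_derive E c (- c * Derive F c ^ 2)).
  { intros c. destruct HF as (_&_&HdF&HdDF&_).
    unfold E. auto_derive; [auto|].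
    change (Derive (fun x => Derive F x) c) with (Derive (Derive F) c).
    change (Derive (fun x => F x) c) with (Derive F c). rewrite Derive2_F. field. }
  assert (HEy : E y <= E 0).
  { apply (nonincreasing_of_is_derive_nonpos E _ 0 y Hy (fun c _ => HE c)).
    intros c Hc. pose proof (pow2_ge_0 (Derive F c)). nra. }
  unfold E in HEy. rewrite Derive_F_0, HFy in HEy.
  pose proof (pow2_ge_0 (Derive F y)). pose proof (F_pos 0).
  (* E(0) - 4/3 = - (F 0 - 2)^2 (F 0 + 1) / 3 *)
  assert ((F 0 - 2) ^ 2 * (F 0 + 1) <= 0) by nra.
  assert (0 < (F 0 - 2) ^ 2) by (pose proof F_0_neq_2; apply pow2_gt_0; lra).
  nra.
Qed.

Lemma F_lt_2 y : 0 <= y -> F y < 2.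
Proof.
  intros Hy. destruct (Rlt_or_le (F y) 2) as [|Hge]; auto. exfalso.
  destruct exists_F_lt_1 as [T [HT HFT]].
  assert (Hcont : continuity F).
  { intros x. apply derivable_continuous_pt, ex_derive_Reals_0. eexists. apply is_derive_F. }
  destruct (IVT_gen F y T 2 Hcont) as [x [Hx HFx]].
  - unfold Rmin, Rmax. repeat destruct Rle_dec; lra.
  - apply (F_neq_2 x); [|exact HFx]. unfold Rmin, Rmax in Hx. destruct Rle_dec; lra.
Qed.

Lemma Derive_F_neg y : 0 < y -> Derive F y < 0.
Proof.
  intros Hy.
  assert (H := decreasing_of_is_derive_neg (fun z => exp (z ^ 2 / 2) * Derive F z) _ 0 y Hy
                 (fun c _ => is_derive_exp_mul_Derive_F c)).
  cbv beta in H. rewrite Derive_F_0, Rmult_0_r in H.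
  assert (exp (y ^ 2 / 2) * Derive F y < 0).
  { apply H. intros c Hc. pose proof (F_lt_2 c ltac:(lra)). pose proof (F_pos c).
    pose proof (exp_pos (c ^ 2 / 2)). assert (F c * (F c - 2) < 0) by nra. nra. }
  pose proof (exp_pos (y ^ 2 / 2)). nra.
Qed.

Lemma F_decreasing x y : 0 <= x -> x < y -> F y < F x.
Proof.
  intros Hx Hxy. apply (decreasing_of_is_derive_neg F (Derive F) x y Hxy (fun c _ => is_derive_F c)).
  intros c Hc. apply Derive_F_neg. lra.
Qed.

Lemma F_0_gt_1 : 1 < F 0.
Proof.
  destruct (Rlt_or_le 1 (F 0)) as [|Hle]; auto. exfalso.
  set (W := fun y => Derive F y + y * F y).
  assert (HW : forall c, is_derive W c (F c * (F c - 1))).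
  { intros c. unfold W.
    replace (F c * (F c - 1)) with (Derive (Derive F) c + (1 * F c + c * Derive F c))
      by (rewrite Derive2_F; ring).
    apply (is_derive_plus (Derive F) (fun y => y * F y)); [apply is_derive_Derive_F|].
    apply (is_derive_mult (fun y => y) F); [auto_derive; auto|apply is_derive_F|].
    intros; apply Rmult_comm. }
  assert (HWneg : forall c, 0 < c -> F c * (F c - 1) < 0).
  { intros c Hc. pose proof (F_decreasing 0 c ltac:(lra) Hc). pose proof (F_pos c). nra. }
  assert (HW1 : W 1 < W 0).
  { apply (decreasing_of_is_derive_neg W _ 0 1 Rlt_0_1 (fun c _ => HW c)).
    intros c Hc. apply HWneg; lra. }
  assert (HW0 : W 0 = 0) by (unfold W; rewrite Derive_F_0; ring).
  assert (Hlim : is_lim W p_infty 0).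
  { rewrite <- (Rplus_0_r 0). apply is_lim_plus'; [apply is_lim_Derive_F|apply is_lim_id_mul_F]. }
  assert (Hle0 := is_lim_le_loc W (fun _ => W 1) p_infty 0 (W 1)).
  simpl in Hle0. apply (Rlt_not_le 0 (W 1)); [lra|]. apply Hle0; [|exact Hlim|apply is_lim_const].
  exists 1. intros y Hy. apply Rlt_le.
  apply (decreasing_of_is_derive_neg W _ 1 y Hy (fun c _ => HW c)). intros c Hc. apply HWneg; lra.
Qed.

End Profile.

Theorem lemma3p2 (F : R -> R) (c0 : R) :
  is_F F c0 ->
  (* (a) *)
  (forall x0 y, 0 <= x0 -> x0 <= y ->
     Derive F y =
       exp (- y ^ 2 / 2 + x0 ^ 2 / 2) * Derive F x0
       + RInt (fun z => exp (- y ^ 2 / 2 + z ^ 2 / 2) * F z * (F z - 2)) x0 y) /\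
  (* (b) *)
  is_lim (fun y => exp (y ^ 2 / 2) * Derive F y / y ^ 2) p_infty (- c0) /\
  (* (c) *)
  (1 < F 0 < 2) /\
  (* (d) *)
  (forall x y, 0 <= x -> x < y -> F y < F x).
Proof.
  intros HF. split; [|split; [|split]].
  - intros x0 y _ _. apply (Derive_F_eq_RInt F c0 HF).
  - apply (is_lim_exp_mul_Derive_F F c0 HF).
  - split; [apply (F_0_gt_1 F c0 HF)|apply (F_lt_2 F c0 HF); lra].
  - apply (F_decreasing F c0 HF).
Qed.
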